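(* Let $A$ (in $\mathcal H$) and $B$ (in $\mathcal K$) be closed densely defined operators such that $A\dashv B$ via a (possibly unbounded) intertwining operator $T_{AB}$ and $B\dashv A$ via a (possibly unbounded) intertwining operator $T_{BA}$, and assume that both $T_{AB}^{-1}$ and $T_{BA}^{-1}$ are everywhere defined and bounded. Then $\sigma_p(A)=\sigma_p(B)$, $\rho(A)=\rho(B)$, and hence $\sigma(A)=\sigma(B)$.
   Context: A closed densely defined operator $T:D(T)\subseteq\mathcal H\to\mathcal K$ is an intertwining operator for $A$ and $B$ if $D(A)\subseteq D(T)$ and $AD(A)\subseteq D(T)$, $TD(A)\subseteq D(B)$, and $BT\xi=TA\xi$ for all $\xi\in D(A)$. $A\dashv B$ means there is such an intertwining operator that is injective with densely defined inverse. $\rho(A)$ is the set of $\lambda$ with $A-\lambda I$ injective and $(A-\lambda I)^{-1}$ bounded everywhere defined; $\sigma(A)=\mathbb C\setminus\rho(A)$; $\sigma_p$ is the set of eigenvalues. *)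

From Stdlib Require Import Reals.
Open Scope R_scope.

Record C := mkC { re : R; im : R }.
Definition C0 : C := mkC 0 0.
Definition C1 : C := mkC 1 0.
Definition Cadd (a b : C) : C := mkC (re a + re b) (im a + im b).
Definition Cmul (a b : C) : C :=
  mkC (re a * re b - im a * im b) (re a * im b + im a * re b).
Definition Cconj (a : C) : C := mkC (re a) (- im a).

Definition dist_of {V : Type} (add : V -> V -> V) (opp : V -> V)
  (inner : V -> V -> C) (x y : V) : R :=
  sqrt (re (inner (add x (opp y)) (add x (opp y)))).

Record Hilbert := {
  car :> Type;
  vadd : car -> car -> car;
  vzero : car;
  vopp : car -> car;
  vscal : C -> car -> car;
  inner : car -> car -> C;
  vaddA : forall x y z, vadd x (vadd y z) = vadd (vadd x y) z;
  vaddC : forall x y, vadd x y = vadd y x;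
  vadd0 : forall x, vadd x vzero = x;
  vaddN : forall x, vadd x (vopp x) = vzero;
  vscal1 : forall x, vscal C1 x = x;
  vscalA : forall a b x, vscal a (vscal b x) = vscal (Cmul a b) x;
  vscalDr : forall a x y, vscal a (vadd x y) = vadd (vscal a x) (vscal a y);
  vscalDl : forall a b x, vscal (Cadd a b) x = vadd (vscal a x) (vscal b x);
  innerD : forall x y z, inner (vadd x y) z = Cadd (inner x z) (inner y z);
  innerZ : forall a x y, inner (vscal a x) y = Cmul a (inner x y);
  inner_conj : forall x y, inner y x = Cconj (inner x y);
  inner_pos : forall x, 0 <= re (inner x x);
  inner_def : forall x, inner x x = C0 -> x = vzero;
  complete : forall u : nat -> car,
    (forall eps, eps > 0 -> exists N, forall m n, (N <= m)%nat -> (N <= n)%nat ->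
        dist_of vadd vopp inner (u m) (u n) < eps) ->
    exists l, forall eps, eps > 0 -> exists N, forall n, (N <= n)%nat ->
        dist_of vadd vopp inner (u n) l < eps
}.

Arguments vadd {h}. Arguments vzero {h}. Arguments vopp {h}.
Arguments vscal {h}. Arguments inner {h}.

Definition hnorm {H : Hilbert} (x : H) : R := sqrt (re (inner x x)).
Definition hsub {H : Hilbert} (x y : H) : H := vadd x (vopp y).
Definition hdist {H : Hilbert} (x y : H) : R := hnorm (hsub x y).

Definition converges {H : Hilbert} (u : nat -> H) (l : H) : Prop :=
  forall eps, eps > 0 -> exists N, forall n, (N <= n)%nat -> hdist (u n) l < eps.

Definition dense {H : Hilbert} (S : H -> Prop) : Prop :=
  forall x eps, eps > 0 -> exists d, S d /\ hdist x d < eps.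

(** * (Possibly unbounded) operators D(T) ⊆ H -> K.
    An operator is a domain predicate together with a function; the values
    of [app] outside [dom] are irrelevant. *)
Record op (H K : Hilbert) := mkOp { dom : H -> Prop; app : H -> K }.
Arguments mkOp {H K}. Arguments dom {H K}. Arguments app {H K}.

Definition linear_op {H K : Hilbert} (T : op H K) : Prop :=
  dom T vzero /\
  (forall x y, dom T x -> dom T y -> dom T (vadd x y)) /\
  (forall a x, dom T x -> dom T (vscal a x)) /\
  (forall x y, dom T x -> dom T y -> app T (vadd x y) = vadd (app T x) (app T y)) /\
  (forall a x, dom T x -> app T (vscal a x) = vscal a (app T x)).

Definition densely_defined {H K : Hilbert} (T : op H K) : Prop := dense (dom T).

Definition closed_op {H K : Hilbert} (T : op H K) : Prop :=
  forall (u : nat -> H) x y, (forall n, dom T (u n)) ->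
    converges u x -> converges (fun n => app T (u n)) y ->
    dom T x /\ app T x = y.

Definition closed_dd_operator {H K : Hilbert} (T : op H K) : Prop :=
  linear_op T /\ closed_op T /\ densely_defined T.

Definition op_injective {H K : Hilbert} (T : op H K) : Prop :=
  forall x y, dom T x -> dom T y -> app T x = app T y -> x = y.

(** range of T = domain of T^{-1} *)
Definition range {H K : Hilbert} (T : op H K) (y : K) : Prop :=
  exists x, dom T x /\ app T x = y.

Definition inverse_densely_defined {H K : Hilbert} (T : op H K) : Prop :=
  dense (range T).

(** for injective T: T^{-1} (defined on range T by T^{-1}(T x) = x) is
    everywhere defined and bounded *)
Definition inverse_bounded_everywhere {H K : Hilbert} (T : op H K) : Prop :=
  (forall y, range T y) /\
  exists M, 0 <= M /\ forall x, dom T x -> hnorm x <= M * hnorm (app T x).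

Definition intertwining {H K : Hilbert} (A : op H H) (B : op K K) (T : op H K) : Prop :=
  closed_dd_operator T /\
  (forall x, dom A x -> dom T x) /\
  (forall x, dom A x -> dom T (app A x)) /\
  (forall x, dom A x -> dom B (app T x)) /\
  (forall x, dom A x -> app B (app T x) = app T (app A x)).

Definition dashv_via {H K : Hilbert} (A : op H H) (B : op K K) (T : op H K) : Prop :=
  intertwining A B T /\ op_injective T /\ inverse_densely_defined T.

Definition dashv {H K : Hilbert} (A : op H H) (B : op K K) : Prop :=
  exists T, dashv_via A B T.

Definition shift {H : Hilbert} (A : op H H) (lam : C) : op H H :=
  mkOp (dom A) (fun x => hsub (app A x) (vscal lam x)).

Definition resolvent_set {H : Hilbert} (A : op H H) (lam : C) : Prop :=
  op_injective (shift A lam) /\ inverse_bounded_everywhere (shift A lam).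

Definition spectrum {H : Hilbert} (A : op H H) (lam : C) : Prop :=
  ~ resolvent_set A lam.

Definition point_spectrum {H : Hilbert} (A : op H H) (lam : C) : Prop :=
  exists x, dom A x /\ x <> vzero /\ app A x = vscal lam x.

(* An intertwining operator T carries eigenvectors of A to eigenvectors of B with
   the same eigenvalue (B T x = T A x = lam T x, and T x <> 0 since T is injective),
   so the two intertwiners give sigma_p(A) = sigma_p(B).  If A - lam is bijective,
   so is B - lam: it is injective because lam is not an eigenvalue of B, and onto
   because every z is T w (T^-1 is everywhere defined), w = (A - lam) x, and then
   z = (B - lam) T x.  The inverse of the closed bijection B - lam is then bounded by
   the bounded inverse theorem, which follows from the Baire category theorem by the
   usual successive approximation argument. *)

From Stdlib Require Import Reals Lra Psatz Classical IndefiniteDescription.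
Open Scope R_scope.

Lemma C_ext (a b : C) : re a = re b -> im a = im b -> a = b.
Proof. destruct a, b; simpl; intros; subst; reflexivity. Qed.

Definition RtoC (r : R) : C := mkC r 0.

Section VectorAlgebra.
Context {H : Hilbert}.
Implicit Types x y z : H.

Lemma add0v x : vadd vzero x = x.
Proof. rewrite vaddC; apply vadd0. Qed.

Lemma addNv x : vadd (vopp x) x = vzero.
Proof. rewrite vaddC; apply vaddN. Qed.

Lemma addKv x y : vadd (vopp x) (vadd x y) = y.
Proof. rewrite vaddA, addNv; apply add0v. Qed.

Lemma addv_cancel_l x y z : vadd x y = vadd x z -> y = z.
Proof. intros E. rewrite <- (addKv x y), E; apply addKv. Qed.

Lemma opp_unique x y : vadd x y = vzero -> vopp x = y.
Proof. intros E. rewrite <- (addKv x y), E, vadd0; reflexivity. Qed.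

Lemma oppK x : vopp (vopp x) = x.
Proof. apply opp_unique, addNv. Qed.

Lemma oppD x y : vopp (vadd x y) = vadd (vopp x) (vopp y).
Proof.
  apply opp_unique.
  rewrite (vaddC _ (vopp x)), vaddA, <- (vaddA _ x y), vaddN, vadd0, vaddN.
  reflexivity.
Qed.

Lemma opp0 : vopp (@vzero H) = vzero.
Proof. apply opp_unique, vadd0. Qed.

Lemma scal0 x : vscal C0 x = vzero.
Proof.
  apply (addv_cancel_l (vscal C0 x)). rewrite vadd0, <- vscalDl.
  f_equal. apply C_ext; simpl; ring.
Qed.

Lemma oppE x : vopp x = vscal (RtoC (-1)) x.
Proof.
  apply opp_unique. rewrite <- (vscal1 _ x) at 1. rewrite <- vscalDl, <- (scal0 x).
  f_equal. apply C_ext; simpl; ring.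
Qed.

Lemma scalC a b x : vscal a (vscal b x) = vscal b (vscal a x).
Proof. rewrite !vscalA. f_equal. apply C_ext; destruct a, b; simpl; ring. Qed.

Lemma scalN a x : vscal a (vopp x) = vopp (vscal a x).
Proof. rewrite !oppE. apply scalC. Qed.

Lemma hsubD x y x' y' : hsub (vadd x y) (vadd x' y') = vadd (hsub x x') (hsub y y').
Proof.
  unfold hsub. rewrite oppD, <- !vaddA. f_equal.
  rewrite !vaddA, (vaddC _ y). reflexivity.
Qed.

Lemma hsubZ a x y : vscal a (hsub x y) = hsub (vscal a x) (vscal a y).
Proof. unfold hsub. rewrite vscalDr, scalN. reflexivity. Qed.

Lemma hsubvv x : hsub x x = vzero.
Proof. apply vaddN. Qed.

Lemma hsubv0 x : hsub x vzero = x.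
Proof. unfold hsub; rewrite opp0; apply vadd0. Qed.

Lemma hsub_swap x y : hsub x y = vopp (hsub y x).
Proof. unfold hsub. rewrite oppD, oppK, vaddC. reflexivity. Qed.

Lemma hsub_trans x y z : hsub x z = vadd (hsub x y) (hsub y z).
Proof. unfold hsub. rewrite <- vaddA, (vaddA _ (vopp y)), addNv, add0v. reflexivity. Qed.

Lemma hsub_eq0 x y : hsub x y = vzero -> x = y.
Proof.
  unfold hsub; intros E. rewrite <- (oppK y). symmetry.
  apply opp_unique. rewrite vaddC; exact E.
Qed.

Lemma subvK x y : vadd (hsub x y) y = x.
Proof. unfold hsub. rewrite <- vaddA, addNv, vadd0. reflexivity. Qed.

Lemma addvK x y : hsub (vadd x y) y = x.
Proof. unfold hsub. rewrite <- vaddA, vaddN, vadd0. reflexivity. Qed.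

Lemma addvKl x y : hsub (vadd x y) x = y.
Proof. rewrite vaddC; apply addvK. Qed.

End VectorAlgebra.

Section Norm.
Context {H : Hilbert}.
Implicit Types x y z : H.

Definition ip x y : R := re (inner x y).

Lemma ipC x y : ip x y = ip y x.
Proof. unfold ip. rewrite (inner_conj _ x y). destruct (inner x y); reflexivity. Qed.

Lemma ipDl x y z : ip (vadd x y) z = ip x z + ip y z.
Proof. unfold ip. rewrite innerD. reflexivity. Qed.

Lemma ipDr x y z : ip z (vadd x y) = ip z x + ip z y.
Proof. rewrite !(ipC z). apply ipDl. Qed.

Lemma ipZl r x y : ip (vscal (RtoC r) x) y = r * ip x y.
Proof. unfold ip. rewrite innerZ. simpl. ring. Qed.

Lemma ipZr r x y : ip y (vscal (RtoC r) x) = r * ip y x.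
Proof. rewrite !(ipC y). apply ipZl. Qed.

Lemma im_inner_self x : im (inner x x) = 0.
Proof.
  pose proof (f_equal im (inner_conj _ x x)).
  destruct (inner x x); simpl in *; lra.
Qed.

Lemma ip_self_ge0 x : 0 <= ip x x.
Proof. apply inner_pos. Qed.

Lemma hnorm_sq x : hnorm x * hnorm x = ip x x.
Proof. apply sqrt_sqrt, inner_pos. Qed.

Lemma hnorm_ge0 x : 0 <= hnorm x.
Proof. apply sqrt_pos. Qed.

Lemma hnorm_eq0 x : hnorm x = 0 -> x = vzero.
Proof.
  intros E. apply inner_def. apply C_ext; simpl.
  - apply sqrt_eq_0; [apply inner_pos | exact E].
  - apply im_inner_self.
Qed.

Lemma hnormZ a x : hnorm (vscal a x) = sqrt (re a * re a + im a * im a) * hnorm x.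
Proof.
  unfold hnorm. rewrite <- sqrt_mult; [| nra | apply inner_pos].
  f_equal. rewrite innerZ, (inner_conj _ (vscal a x) x), innerZ.
  pose proof (im_inner_self x).
  destruct a as [a1 a2]; destruct (inner x x) as [p q]; simpl in *. subst q. ring.
Qed.

Lemma hnormZ_real r x : hnorm (vscal (RtoC r) x) = Rabs r * hnorm x.
Proof.
  rewrite hnormZ. simpl. replace (r * r + 0 * 0) with (Rsqr r) by (unfold Rsqr; ring).
  rewrite sqrt_Rsqr_abs. reflexivity.
Qed.

Lemma hnormN x : hnorm (vopp x) = hnorm x.
Proof. rewrite oppE, hnormZ_real, Rabs_left by lra. ring. Qed.

Lemma hnorm0 : hnorm (@vzero H) = 0.
Proof. rewrite <- (scal0 vzero). change C0 with (RtoC 0). rewrite hnormZ_real, Rabs_R0. ring. Qed.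

Lemma ip0r x : ip x vzero = 0.
Proof. rewrite <- (scal0 vzero). change C0 with (RtoC 0). rewrite ipZr. ring. Qed.

Lemma cauchy_schwarz x y : ip x y <= hnorm x * hnorm y.
Proof.
  assert (Hq : forall t, 0 <= ip x x + 2 * t * ip x y + t * t * ip y y).
  { intro t. pose proof (ip_self_ge0 (vadd x (vscal (RtoC t) y))) as Hp.
    rewrite ipDl, !ipDr, !ipZl, !ipZr, (ipC y x) in Hp. lra. }
  assert (Hsq : ip x y * ip x y <= ip x x * ip y y).
  { destruct (Req_dec (ip y y) 0) as [E|E].
    - assert (y = vzero) as ->.
      { apply hnorm_eq0. unfold hnorm. fold (ip y y). rewrite E. apply sqrt_0. }
      rewrite ip0r. nra.
    - (* the discriminant of the quadratic [Hq] is nonpositive *)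
      pose proof (ip_self_ge0 y). pose proof (Hq (- ip x y / ip y y)) as Ht.
      assert (0 < ip y y) by lra.
      replace (ip x x + 2 * (- ip x y / ip y y) * ip x y
               + - ip x y / ip y y * (- ip x y / ip y y) * ip y y)
        with ((ip x x * ip y y - ip x y * ip x y) / ip y y) in Ht by (field; lra).
      apply Rmult_le_compat_r with (r := ip y y) in Ht; [| lra].
      unfold Rdiv in Ht. rewrite Rmult_assoc, Rinv_l, Rmult_1_r, Rmult_0_l in Ht; lra. }
  rewrite <- (hnorm_sq x), <- (hnorm_sq y) in Hsq.
  pose proof (hnorm_ge0 x); pose proof (hnorm_ge0 y).
  destruct (Rle_dec (ip x y) 0); [nra |].
  apply Rsqr_incr_0_var; unfold Rsqr; nra.
Qed.

Lemma hnormD_le x y : hnorm (vadd x y) <= hnorm x + hnorm y.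
Proof.
  pose proof (cauchy_schwarz x y).
  pose proof (hnorm_ge0 x); pose proof (hnorm_ge0 y); pose proof (hnorm_ge0 (vadd x y)).
  pose proof (hnorm_sq x); pose proof (hnorm_sq y).
  assert (hnorm (vadd x y) * hnorm (vadd x y) <= (hnorm x + hnorm y) * (hnorm x + hnorm y)).
  { rewrite hnorm_sq, ipDl, !ipDr, (ipC y x). nra. }
  apply Rsqr_incr_0_var; unfold Rsqr; nra.
Qed.

Lemma hnorm_sub_le x y : hnorm (hsub x y) <= hnorm x + hnorm y.
Proof. unfold hsub. rewrite <- (hnormN y). apply hnormD_le. Qed.

Lemma hdistC x y : hdist x y = hdist y x.
Proof. unfold hdist. rewrite hsub_swap, hnormN. reflexivity. Qed.

Lemma hdist_triangle x y z : hdist x z <= hdist x y + hdist y z.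
Proof. unfold hdist. rewrite (hsub_trans x y z). apply hnormD_le. Qed.

Lemma hdistvv x : hdist x x = 0.
Proof. unfold hdist. rewrite hsubvv. apply hnorm0. Qed.

Lemma hdistv0 x : hdist x vzero = hnorm x.
Proof. unfold hdist. rewrite hsubv0. reflexivity. Qed.

Lemma hdist_ge0 x y : 0 <= hdist x y.
Proof. apply hnorm_ge0. Qed.

End Norm.

Lemma half_pow_small eps : 0 < eps -> exists N, forall n, (N <= n)%nat -> (1/2)^n < eps.
Proof.
  intros He. destruct (pow_lt_1_zero (1/2)) with (y := eps) as [N HN].
  - rewrite Rabs_right; lra.
  - exact He.
  - exists N. intros n Hn. specialize (HN n Hn).
    rewrite Rabs_right in HN; [exact HN | apply Rle_ge, pow_le; lra].
Qed.

Section Convergence.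
Context {H : Hilbert}.
Implicit Types (u v : nat -> H) (x y : H).

Lemma converges_ext u v x : (forall n, u n = v n) -> converges u x -> converges v x.
Proof.
  intros E Cu eps He. destruct (Cu eps He) as [N HN].
  exists N; intros n Hn. rewrite <- E. auto.
Qed.

Lemma converges_add u v x y :
  converges u x -> converges v y -> converges (fun n => vadd (u n) (v n)) (vadd x y).
Proof.
  intros Cu Cv eps He.
  destruct (Cu (eps / 2)) as [N1 H1]; [lra |]. destruct (Cv (eps / 2)) as [N2 H2]; [lra |].
  exists (max N1 N2). intros n Hn. unfold hdist. rewrite hsubD.
  specialize (H1 n ltac:(lia)); specialize (H2 n ltac:(lia)). unfold hdist in *.
  pose proof (hnormD_le (hsub (u n) x) (hsub (v n) y)). lra.
Qed.

Lemma converges_scal u x a : converges u x -> converges (fun n => vscal a (u n)) (vscal a x).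
Proof.
  intros Cu eps He. set (c := sqrt (re a * re a + im a * im a)).
  assert (0 <= c) by apply sqrt_pos.
  destruct (Cu (eps / (c + 1))) as [N HN]; [apply Rdiv_lt_0_compat; lra |].
  exists N. intros n Hn. unfold hdist. rewrite <- hsubZ, hnormZ. fold c.
  specialize (HN n Hn). unfold hdist in HN. pose proof (hnorm_ge0 (hsub (u n) x)).
  apply Rmult_lt_compat_r with (r := c + 1) in HN; [| lra].
  unfold Rdiv in HN. rewrite Rmult_assoc, Rinv_l, Rmult_1_r in HN; nra.
Qed.

Lemma hdist_limit_le u x c r k :
  converges u x -> (forall n, (k <= n)%nat -> hdist (u n) c <= r) -> hdist x c <= r.
Proof.
  intros Cu Hr. apply Rnot_lt_le. intro Hlt.
  destruct (Cu (hdist x c - r)) as [N HN]; [lra |].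
  specialize (HN (max N k) ltac:(lia)). specialize (Hr (max N k) ltac:(lia)).
  pose proof (hdist_triangle x (u (max N k)) c). rewrite hdistC in HN. lra.
Qed.

Lemma converges_of_geometric u c :
  (forall k m, (k <= m)%nat -> hdist (u m) (u k) <= c * (1/2)^k) -> exists l, converges u l.
Proof.
  intros Hg. assert (Hc : 0 <= c).
  { specialize (Hg 0%nat 0%nat (le_n _)). pose proof (hdist_ge0 (u 0%nat) (u 0%nat)).
    simpl in Hg. lra. }
  apply (complete H u). intros eps He.
  destruct (half_pow_small (eps / (2 * c + 1))) as [N HN]; [apply Rdiv_lt_0_compat; lra |].
  exists N. intros m n Hm Hn.
  pose proof (hdist_triangle (u m) (u N) (u n)). rewrite (hdistC (u N)) in H0.
  pose proof (Hg N m Hm). pose proof (Hg N n Hn).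
  specialize (HN N (le_n _)). pose proof (pow_lt (1/2) N ltac:(lra)).
  apply Rmult_lt_compat_r with (r := 2 * c + 1) in HN; [| lra].
  unfold Rdiv in HN. rewrite Rmult_assoc, Rinv_l, Rmult_1_r in HN; [| lra].
  change (dist_of vadd vopp inner (u m) (u n)) with (hdist (u m) (u n)). nra.
Qed.

End Convergence.

Section LinearOperators.
Context {H K : Hilbert} (T : op H K).
Hypothesis Tlin : linear_op T.

Lemma lin_dom0 : dom T vzero.
Proof. apply Tlin. Qed.

Lemma lin0 : app T vzero = vzero.
Proof.
  destruct Tlin as (D0 & _ & _ & LD & _).
  apply (addv_cancel_l (app T vzero)). rewrite vadd0, <- LD, vadd0; auto.
Qed.

Lemma linZ a x : dom T x -> dom T (vscal a x) /\ app T (vscal a x) = vscal a (app T x).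
Proof. destruct Tlin as (_ & _ & DZ & _ & LZ). auto. Qed.

Lemma linD x y : dom T x -> dom T y ->
  dom T (vadd x y) /\ app T (vadd x y) = vadd (app T x) (app T y).
Proof. destruct Tlin as (_ & DD & _ & LD & _). auto. Qed.

Lemma linB x y : dom T x -> dom T y ->
  dom T (hsub x y) /\ app T (hsub x y) = hsub (app T x) (app T y).
Proof.
  intros Hx Hy. unfold hsub. rewrite !oppE.
  destruct (linZ (RtoC (-1)) y Hy) as [D1 E1].
  destruct (linD x _ Hx D1) as [D2 E2]. rewrite E2, E1. auto.
Qed.

Lemma op_injectiveP :
  op_injective T <-> forall x, dom T x -> app T x = vzero -> x = vzero.
Proof.
  split.
  - intros I x Hx E. apply I; [exact Hx | apply lin_dom0 | rewrite lin0; exact E].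
  - intros Z x y Hx Hy E. apply hsub_eq0. destruct (linB x y Hx Hy) as [D1 E1].
    apply Z; [exact D1 |]. rewrite E1, E. apply hsubvv.
Qed.

End LinearOperators.

Lemma hdist_geometric_steps {H : Hilbert} (p : nat -> H) a :
  (forall k, hdist (p (S k)) (p k) <= a * (1/2)^k) ->
  forall k m, (k <= m)%nat -> hdist (p m) (p k) <= 2 * a * (1/2)^k.
Proof.
  intros Hs k m Hkm. replace m with (k + (m - k))%nat by lia.
  assert (Hsum : forall j, hdist (p (k + j)%nat) (p k) <= 2 * a * ((1/2)^k - (1/2)^(k + j))).
  { induction j as [| j IH].
    - rewrite Nat.add_0_r, hdistvv. lra.
    - rewrite Nat.add_succ_r.
      pose proof (hdist_triangle (p (S (k + j))) (p (k + j)%nat) (p k)).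
      specialize (Hs (k + j)%nat). simpl pow. lra. }
  eapply Rle_trans; [apply Hsum |].
  assert (0 <= a).
  { specialize (Hs 0%nat). pose proof (hdist_ge0 (p 1%nat) (p 0%nat)). simpl in Hs. lra. }
  pose proof (pow_lt (1/2) (k + (m - k)) ltac:(lra)). nra.
Qed.

Section Baire.
Context {H : Hilbert}.

Definition adherent (S : H -> Prop) (z : H) : Prop :=
  forall eps, eps > 0 -> exists w, S w /\ hdist z w < eps.

Lemma nested_balls_meet (c : nat -> H) (r : nat -> R) :
  (forall k, 0 <= r k <= (1/2)^k) ->
  (forall k w, hdist w (c (S k)) <= r (S k) -> hdist w (c k) <= r k) ->
  exists l, forall k, hdist l (c k) <= r k.
Proof.
  intros Hr Hnest.
  assert (Hsub : forall j k w, hdist w (c (k + j)%nat) <= r (k + j)%nat -> hdist w (c k) <= r k).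
  { induction j as [| j IH]; intros k w Hw.
    - rewrite Nat.add_0_r in Hw; exact Hw.
    - rewrite Nat.add_succ_r in Hw. apply IH, Hnest, Hw. }
  assert (Hcentres : forall k m, (k <= m)%nat -> hdist (c m) (c k) <= r k).
  { intros k m Hkm. replace m with (k + (m - k))%nat by lia. apply (Hsub (m - k)%nat).
    rewrite hdistvv. apply Hr. }
  destruct (converges_of_geometric c 1) as [l Hl].
  { intros k m Hkm. specialize (Hcentres k m Hkm). specialize (Hr k). lra. }
  exists l. intros k. apply (hdist_limit_le c l (c k) (r k) k Hl), Hcentres.
Qed.

Lemma shrink_ball_avoiding (G : H -> Prop) c r : 0 < r ->
  ~ (forall z, hdist z c < r -> adherent G z) ->
  exists c' r', 0 < r' /\ r' <= r / 2 /\
    forall w, hdist w c' <= r' -> hdist w c <= r /\ ~ G w.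
Proof.
  intros Hr Hnot.
  assert (Hz : exists z, hdist z c < r /\ exists eps, eps > 0 /\ forall w, G w -> eps <= hdist z w).
  { apply NNPP; intro Hno; apply Hnot. intros z Hzc eps He.
    apply NNPP; intro Hfar; apply Hno; exists z; split; [exact Hzc |].
    exists eps; split; [exact He |]. intros w Hw. apply Rnot_lt_le; intro Hlt.
    apply Hfar; exists w; auto. }
  destruct Hz as [z [Hzc [eps [He Hfar]]]].
  pose proof (Rmin_l eps (r - hdist z c)). pose proof (Rmin_r eps (r - hdist z c)).
  set (s := Rmin eps (r - hdist z c)) in *.
  assert (0 < s) by (apply Rmin_pos; lra).
  pose proof (hdist_ge0 z c).
  exists z, (s / 2). split; [lra |]. split; [lra |]. intros w Hw. split.
  - pose proof (hdist_triangle w z c). lra.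
  - intros Hw'. specialize (Hfar w Hw'). rewrite hdistC in Hw. lra.
Qed.

Theorem baire (F : nat -> H -> Prop) : (forall z, exists n, F n z) ->
  exists n z0 r, 0 < r /\ forall z, hdist z z0 < r -> adherent (F n) z.
Proof.
  intros Hcover. apply NNPP. intro Hnowhere.
  assert (Hstep : forall n c r, exists p : H * R, 0 < r ->
    0 < snd p /\ snd p <= r / 2 /\
    forall w, hdist w (fst p) <= snd p -> hdist w c <= r /\ ~ F n w).
  { intros n c r. destruct (Rlt_dec 0 r) as [Hr | Hr]; [| exists (c, r); lra].
    destruct (shrink_ball_avoiding (F n) c r Hr) as [c' [r' Hball]].
    - intro Hdense. apply Hnowhere. exists n, c, r. auto.
    - exists (c', r'). auto. }
  set (g n c r := proj1_sig (constructive_indefinite_description _ (Hstep n c r))).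
  assert (Hg : forall n c r, 0 < r -> 0 < snd (g n c r) /\ snd (g n c r) <= r / 2 /\
    forall w, hdist w (fst (g n c r)) <= snd (g n c r) -> hdist w c <= r /\ ~ F n w).
  { intros n c r. exact (proj2_sig (constructive_indefinite_description _ (Hstep n c r))). }
  clearbody g.
  set (b := nat_rect (fun _ => (H * R)%type) (vzero, 1) (fun k p => g k (fst p) (snd p))).
  assert (Hb : forall k, 0 < snd (b k) <= (1/2)^k).
  { induction k as [| k IH]; [simpl; lra |].
    change (b (S k)) with (g k (fst (b k)) (snd (b k))).
    destruct (Hg k (fst (b k)) (snd (b k)) (proj1 IH)) as [Hpos [Hhalf _]].
    simpl pow. lra. }
  destruct (nested_balls_meet (fun k => fst (b k)) (fun k => snd (b k))) as [l Hl].
  - intros k. specialize (Hb k). lra.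
  - intros k w Hw. apply (Hg k (fst (b k)) (snd (b k)) (proj1 (Hb k))), Hw.
  - destruct (Hcover l) as [n Hn].
    exact (proj2 (proj2 (proj2 (Hg n (fst (b n)) (snd (b n)) (proj1 (Hb n)))) l (Hl (S n))) Hn).
Qed.

End Baire.

Lemma hsub_recentre {H : Hilbert} (w z a b : H) :
  hsub z (hsub a b) = hsub (hsub (vadd w z) a) (hsub w b).
Proof.
  unfold hsub. rewrite !oppD, !oppK, (vaddC _ w z), <- !vaddA. f_equal.
  rewrite !vaddA, (vaddC _ w (vopp a)), <- (vaddA _ (vopp a) w), vaddN, vadd0.
  reflexivity.
Qed.


Section BoundedInverse.
Context {H K : Hilbert} (L : op H K).
Hypothesis Llin : linear_op L.

Definition image_ball (rad : R) (w : K) : Prop :=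
  exists y, dom L y /\ hnorm y <= rad /\ app L y = w.

Lemma image_ball_adherent_somewhere : (forall z, range L z) ->
  exists N z0 r, 0 < r /\ 0 <= N /\ forall z, hdist z z0 < r -> adherent (image_ball N) z.
Proof.
  intros Lsurj.
  destruct (baire (fun n => image_ball (INR n))) as [n [z0 [r [Hr Hball]]]].
  - intros z. destruct (Lsurj z) as [y [Hy <-]]. destruct (INR_unbounded (hnorm y)) as [n Hn].
    exists n, y. split; [exact Hy |]. split; [lra | reflexivity].
  - exists (INR n), z0, r. split; [exact Hr |]. split; [apply pos_INR | exact Hball].
Qed.

(* translate the ball to the origin using the difference of two approximations *)
Lemma image_ball_adherent_at0 N z0 r :
  (forall z, hdist z z0 < r -> adherent (image_ball N) z) ->
  forall z, hnorm z < r -> adherent (image_ball (2 * N)) z.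
Proof.
  intros Hball z Hz eps He.
  destruct (Hball (vadd z0 z)) with (eps := eps / 2) as [w1 [[y1 [D1 [N1 <-]]] E1]].
  { unfold hdist. rewrite addvKl. exact Hz. } { lra. }
  destruct (Hball z0) with (eps := eps / 2) as [w2 [[y2 [D2 [N2 <-]]] E2]].
  { rewrite hdistvv. pose proof (hnorm_ge0 z). lra. } { lra. }
  destruct (linB L Llin y1 y2 D1 D2) as [D3 E3].
  exists (app L (hsub y1 y2)). split.
  - exists (hsub y1 y2). split; [exact D3 |]. split; [| reflexivity].
    pose proof (hnorm_sub_le y1 y2). lra.
  - rewrite E3. unfold hdist in *. rewrite (hsub_recentre z0).
    pose proof (hnorm_sub_le (hsub (vadd z0 z) (app L y1)) (hsub z0 (app L y2))). lra.
Qed.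

Lemma image_ball_adherent_scaled N r : 0 < r ->
  (forall z, hnorm z < r -> adherent (image_ball N) z) ->
  forall z, adherent (image_ball (2 * N / r * hnorm z)) z.
Proof.
  intros Hr Hball z eps He.
  destruct (Req_dec (hnorm z) 0) as [Z | Z].
  { apply hnorm_eq0 in Z as ->. exists vzero. split.
    - exists vzero. split; [apply lin_dom0, Llin |]. rewrite (@hnorm0 H), (@hnorm0 K), lin0 by exact Llin.
      split; [lra | reflexivity].
    - rewrite hdistvv. lra. }
  pose proof (hnorm_ge0 z).
  (* rescale [z] into the ball of radius [r], approximate, and scale back *)
  set (s := r / (2 * hnorm z)). assert (Hs : 0 < s) by (apply Rdiv_lt_0_compat; lra).
  destruct (Hball (vscal (RtoC s) z)) with (eps := s * eps) as [w [[y [Dy [Ny <-]]] Ey]].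
  { rewrite hnormZ_real, Rabs_right by lra. unfold s. field_simplify; lra. }
  { nra. }
  assert (Hsinv : 0 < / s) by (apply Rinv_0_lt_compat; lra).
  destruct (linZ L Llin (RtoC (/ s)) y Dy) as [Dy' Ey'].
  exists (app L (vscal (RtoC (/ s)) y)). split.
  - exists (vscal (RtoC (/ s)) y). split; [exact Dy' |]. split; [| reflexivity].
    rewrite hnormZ_real, Rabs_right by lra.
    replace (2 * N / r * hnorm z) with (/ s * N) by (unfold s; field; lra).
    apply Rmult_le_compat_l; lra.
  - assert (Hz : z = vscal (RtoC (/ s)) (vscal (RtoC s) z)).
    { rewrite vscalA, <- (vscal1 _ z) at 1. f_equal. apply C_ext; simpl; field; lra. }
    rewrite Ey', Hz at 1. unfold hdist in *. rewrite <- hsubZ, hnormZ_real, Rabs_right by lra.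
    apply Rmult_lt_compat_l with (r := / s) in Ey; [| exact Hsinv].
    replace (/ s * (s * eps)) with eps in Ey by (field; lra). exact Ey.
Qed.

Section Iteration.
Variable M : R.
Hypothesis M_ge0 : 0 <= M.
Hypothesis Ladherent : forall z, adherent (image_ball (M * hnorm z)) z.

(* successive approximation of [z], each step correcting the previous remainder *)
Lemma approximating_sequence z : 0 < hnorm z ->
  exists p : nat -> H, p 0%nat = vzero /\ (forall k, dom L (p k)) /\
    (forall k, hdist (p (S k)) (p k) <= M * hnorm z * (1/2)^k) /\
    (forall k, hdist (app L (p k)) z <= hnorm z * (1/2)^k).
Proof.
  intros Hz. set (d := hnorm z).
  assert (Hcorr : forall (e : K) (k : nat), exists y, dom L y /\ hnorm y <= M * hnorm e /\
             hnorm (hsub e (app L y)) < d * (1/2)^(S k)).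
  { intros e k. destruct (Ladherent e (d * (1/2)^(S k))) as [w [[y [Dy [Ny <-]]] Ey]].
    { apply Rmult_lt_0_compat; [exact Hz | apply pow_lt; lra]. }
    exists y. auto. }
  set (h e k := proj1_sig (constructive_indefinite_description _ (Hcorr e k))).
  assert (Hh : forall e k, dom L (h e k) /\ hnorm (h e k) <= M * hnorm e /\
             hnorm (hsub e (app L (h e k))) < d * (1/2)^(S k)).
  { intros e k. exact (proj2_sig (constructive_indefinite_description _ (Hcorr e k))). }
  clearbody h.
  (* pairs (partial sum, remainder) *)
  set (q := nat_rect (fun _ => (H * K)%type) (vzero, z)
              (fun k st => (vadd (fst st) (h (snd st) k), hsub (snd st) (app L (h (snd st) k))))).
  assert (Hq : forall k, dom L (fst (q k)) /\ vadd (app L (fst (q k))) (snd (q k)) = z /\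
                         hnorm (snd (q k)) <= d * (1/2)^k).
  { induction k as [| k [Dk [Ek Nk]]].
    - simpl. rewrite lin0 by exact Llin. split; [apply lin_dom0, Llin |].
      split; [apply add0v | unfold d; lra].
    - change (q (S k)) with (vadd (fst (q k)) (h (snd (q k)) k),
                             hsub (snd (q k)) (app L (h (snd (q k)) k))); simpl.
      destruct (Hh (snd (q k)) k) as [Dh [_ Nh]].
      destruct (linD L Llin _ _ Dk Dh) as [D' E']. split; [exact D' |]. split.
      + rewrite E', <- vaddA, (vaddC _ (app L (h _ k))), subvK. exact Ek.
      + left; exact Nh. }
  exists (fun k => fst (q k)). split; [reflexivity |]. split; [intros k; apply Hq |]. split.
  - intros k. change (fst (q (S k))) with (vadd (fst (q k)) (h (snd (q k)) k)).
    unfold hdist. rewrite addvKl.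
    destruct (Hq k) as [_ [_ Nk]]. destruct (Hh (snd (q k)) k) as [_ [Nh _]].
    pose proof (hnorm_ge0 (snd (q k))). pose proof (pow_lt (1/2) k ltac:(lra)). nra.
  - intros k. destruct (Hq k) as [_ [Ek Nk]]. rewrite hdistC, <- Ek.
    unfold hdist. rewrite addvKl. exact Nk.
Qed.

Hypothesis Lclosed : closed_op L.
Hypothesis Linj : op_injective L.

Lemma bounded_below_of_adherent y : dom L y -> hnorm y <= 2 * M * hnorm (app L y).
Proof.
  intros Hy. set (z := app L y).
  destruct (Req_dec (hnorm z) 0) as [Z | Z].
  { apply hnorm_eq0 in Z. rewrite (proj1 (op_injectiveP L Llin) Linj y Hy Z), hnorm0.
    pose proof (hnorm_ge0 z). nra. }
  pose proof (hnorm_ge0 z).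
  destruct (approximating_sequence z ltac:(lra)) as [p [P0 [Pdom [Pstep Pimg]]]].
  pose proof (hdist_geometric_steps p (M * hnorm z) Pstep) as Pcauchy.
  destruct (converges_of_geometric p (2 * (M * hnorm z))) as [x Hx]; [exact Pcauchy |].
  assert (HLp : converges (fun k => app L (p k)) z).
  { intros eps He. destruct (half_pow_small (eps / hnorm z)) as [N HN].
    { apply Rdiv_lt_0_compat; lra. }
    exists N. intros n Hn. specialize (HN n Hn). specialize (Pimg n).
    apply Rmult_lt_compat_r with (r := hnorm z) in HN; [| lra].
    unfold Rdiv in HN. rewrite Rmult_assoc, Rinv_l, Rmult_1_r in HN; [| exact Z]. lra. }
  destruct (Lclosed p x z Pdom Hx HLp) as [Dx Ex].
  assert (x = y) as <- by (apply Linj; auto).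
  rewrite <- hdistv0, <- P0.
  apply (hdist_limit_le p x (p 0%nat) _ 0%nat Hx). intros n _.
  specialize (Pcauchy 0%nat n ltac:(lia)). simpl in Pcauchy. lra.
Qed.

End Iteration.

Theorem bounded_inverse : closed_op L -> op_injective L -> (forall z, range L z) ->
  exists M, 0 <= M /\ forall y, dom L y -> hnorm y <= M * hnorm (app L y).
Proof.
  intros Lclosed Linj Lsurj.
  destruct (image_ball_adherent_somewhere Lsurj) as [N [z0 [r [Hr [HN Hball]]]]].
  pose proof (image_ball_adherent_scaled (2 * N) r Hr
                (image_ball_adherent_at0 N z0 r Hball)) as Hscaled.
  assert (HM : 0 <= 2 * (2 * N) / r) by (apply Rmult_le_pos; [lra | left; apply Rinv_0_lt_compat, Hr]).
  exists (2 * (2 * (2 * N) / r)). split; [lra |].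
  exact (bounded_below_of_adherent _ HM Hscaled Lclosed Linj).
Qed.

End BoundedInverse.

Section Shift.
Context {H : Hilbert} (A : op H H) (lam : C).

Lemma shift_linear : linear_op A -> linear_op (shift A lam).
Proof.
  intros Alin. pose proof Alin as (D0 & DD & DZ & LD & LZ).
  split; [exact D0 |]. split; [exact DD |]. split; [exact DZ |]. split; simpl.
  - intros x y Hx Hy. rewrite LD, vscalDr by assumption. apply hsubD.
  - intros a x Hx. rewrite LZ, hsubZ by assumption. f_equal. apply scalC.
Qed.

Lemma shift_closed : closed_op A -> closed_op (shift A lam).
Proof.
  intros Aclosed u x y Du Cu Cy. simpl in *.
  assert (CA : converges (fun n => app A (u n)) (vadd y (vscal lam x))).
  { apply (converges_ext (fun n => vadd (hsub (app A (u n)) (vscal lam (u n))) (vscal lam (u n)))).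
    - intros n. apply subvK.
    - apply converges_add; [exact Cy | apply converges_scal, Cu]. }
  destruct (Aclosed u x _ Du Cu CA) as [Dx ->]. split; [exact Dx | apply addvK].
Qed.

Lemma point_spectrum_shift :
  point_spectrum A lam <-> exists x, dom A x /\ x <> vzero /\ app (shift A lam) x = vzero.
Proof.
  unfold point_spectrum; simpl. split; intros [x [Dx [Nx Ex]]]; exists x.
  - rewrite Ex. auto using hsubvv.
  - auto using hsub_eq0.
Qed.

Lemma shift_injective : linear_op A -> ~ point_spectrum A lam -> op_injective (shift A lam).
Proof.
  intros Alin Hnp. apply (op_injectiveP _ (shift_linear Alin)). intros x Dx Ex.
  apply NNPP. intro Nx. apply Hnp, point_spectrum_shift. eauto.
Qed.

End Shift.

Lemma point_spectrum_transfer {H K : Hilbert} (A : op H H) (B : op K K) (T : op H K) lam :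
  intertwining A B T -> op_injective T -> point_spectrum A lam -> point_spectrum B lam.
Proof.
  intros ((Tlin & _ & _) & TA & _ & TB & Tcomm) Tinj [x [Dx [Nx Ex]]].
  exists (app T x). split; [auto |]. split.
  - intro Z. apply Nx, (proj1 (op_injectiveP T Tlin) Tinj x (TA x Dx) Z).
  - rewrite Tcomm, Ex by exact Dx. apply linZ; auto.
Qed.

Lemma resolvent_set_transfer {H K : Hilbert} (A : op H H) (B : op K K) (T : op H K) lam :
  closed_dd_operator A -> closed_dd_operator B -> intertwining A B T ->
  (forall z, range T z) -> (point_spectrum B lam -> point_spectrum A lam) ->
  resolvent_set A lam -> resolvent_set B lam.
Proof.
  intros (Alin & _) (Blin & Bclosed & _) Tint Tsurj Hps [Ainj [Asurj _]].
  pose proof Tint as ((Tlin & _ & _) & TA & TAA & TB & Tcomm).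
  assert (Binj : op_injective (shift B lam)).
  { apply (shift_injective B lam Blin). intro HB.
    destruct (Hps HB) as [x [Dx [Nx Ex]]]. apply Nx.
    apply (proj1 (op_injectiveP _ (shift_linear A lam Alin)) Ainj x Dx). simpl.
    rewrite Ex. apply hsubvv. }
  assert (Bsurj : forall z, range (shift B lam) z).
  { intros z. destruct (Tsurj z) as [w [Dw <-]]. destruct (Asurj w) as [x [Dx <-]].
    exists (app T x). simpl. split; [exact (TB x Dx) |].
    destruct (linZ T Tlin lam x (TA x Dx)) as [DZ EZ].
    rewrite Tcomm, <- EZ by exact Dx.
    symmetry. apply (linB T Tlin _ _ (TAA x Dx) DZ). }
  split; [exact Binj |]. split; [exact Bsurj |].
  apply bounded_inverse; [apply shift_linear, Blin | apply shift_closed, Bclosed | exact Binj | exact Bsurj].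
Qed.

Theorem proposition3p21 (H K : Hilbert) (A : op H H) (B : op K K)
  (TAB : op H K) (TBA : op K H) :
  closed_dd_operator A -> closed_dd_operator B ->
  dashv_via A B TAB -> dashv_via B A TBA ->
  inverse_bounded_everywhere TAB -> inverse_bounded_everywhere TBA ->
  (forall lam, point_spectrum A lam <-> point_spectrum B lam) /\
  (forall lam, resolvent_set A lam <-> resolvent_set B lam) /\
  (forall lam, spectrum A lam <-> spectrum B lam).
Proof.
  intros HA HB [IAB [JAB _]] [IBA [JBA _]] [SAB _] [SBA _].
  assert (Hps : forall lam, point_spectrum A lam <-> point_spectrum B lam).
  { intros lam. split; [apply (point_spectrum_transfer A B TAB) | apply (point_spectrum_transfer B A TBA)];
      assumption. }
  assert (Hres : forall lam, resolvent_set A lam <-> resolvent_set B lam).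
  { intros lam. split.
    - apply (resolvent_set_transfer A B TAB); try assumption. apply Hps.
    - apply (resolvent_set_transfer B A TBA); try assumption. apply Hps. }
  split; [exact Hps |]. split; [exact Hres |].
  intros lam. unfold spectrum. rewrite Hres. reflexivity.
Qed.
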